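(* (a) $\mathsf{SP_{tot}P}=\mathsf{SPP}$, (b) $\mathsf{WP_{tot}P}=\mathsf{WPP}$, (c) $\mathsf{{C_=}_{tot}P}=\mathsf{C_=P}$, and (d) $\mathsf{P_{tot}P}=\mathsf{PP}$.
   Context: An NPTM is a non-deterministic polynomial-time Turing machine. For an NPTM $M$ and input $x$, $acc_M(x)$, $rej_M(x)$ are the numbers of accepting and rejecting paths of $M$ on $x$, and $tot_M(x)$ is the number of all computation paths of $M$ on $x$ minus $1$. $\mathsf{TotP}=\{tot_M\}$, $\mathsf{GapP}=\{acc_M-rej_M\}$ over all NPTMs $M$; $\mathsf{Gap_{tot}P}$ is the class of differences $g-h$ with $g,h\in\mathsf{TotP}$; $\mathsf{FP}$ is the class of polynomial-time computable functions. For a function class $\mathcal{F}\in\{\mathsf{GapP},\mathsf{Gap_{tot}P}\}$ define: $\mathsf{SPP}$ (resp. $\mathsf{SP_{tot}P}$): languages $L$ with some $f\in\mathsf{GapP}$ (resp. $\mathsf{Gap_{tot}P}$) such that $f(x)=1$ if $x\in L$ and $f(x)=0$ if $x\notin L$. $\mathsf{WPP}$ (resp. $\mathsf{WP_{tot}P}$): languages $L$ with some $f\in\mathsf{GapP}$ (resp. $\mathsf{Gap_{tot}P}$) and some $g\in\mathsf{FP}$ with $0\notin\mathrm{range}(g)$ such that $f(x)=g(x)$ if $x\in L$ and $f(x)=0$ if $x\notin L$. $\mathsf{C_=P}$ (resp. $\mathsf{{C_=}_{tot}P}$): languages $L$ with some $f\in\mathsf{GapP}$ (resp. $\mathsf{Gap_{tot}P}$)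 such that $x\in L\iff f(x)=0$. $\mathsf{PP}$ (resp. $\mathsf{P_{tot}P}$): languages $L$ with some $f\in\mathsf{GapP}$ (resp. $\mathsf{Gap_{tot}P}$) such that $x\in L\iff f(x)>0$. *)

From HB Require Import structures.
From mathcomp Require Import all_boot all_order all_algebra.
Set Implicit Arguments. Unset Strict Implicit. Unset Printing Implicit Defensive.
Import GRing.Theory Num.Theory.

(* States are naturals < tm_nstates, tape symbols are naturals < tm_nsyms;
   symbol 0 is the blank, 1 encodes the input bit 'false'/0, 2 encodes 'true'/1. *)
Inductive move := MoveL | MoveR | MoveS.
Definition move_eqb (a b : move) : bool :=
  match a, b with MoveL, MoveL | MoveR, MoveR | MoveS, MoveS => true | _, _ => false end.
Lemma move_eqP : Equality.axiom move_eqb.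
Proof. by case; case; constructor. Qed.
HB.instance Definition _ := hasDecEq.Build move move_eqP.

Record TM := {
  tm_nstates : nat;
  tm_nsyms : nat;
  tm_start : nat;
  tm_accept : nat -> bool;
  (* nondeterministic transition relation: (state, read symbol) |->
     list of (new state, written symbol, head move); empty list = halt *)
  tm_delta : nat -> nat -> seq (nat * nat * move)
}.

Definition wf_TM (M : TM) : Prop :=
  [/\ 3 <= tm_nsyms M, tm_start M < tm_nstates M,
      (forall q s, all (fun t => (t.1.1 < tm_nstates M) && (t.1.2 < tm_nsyms M))
                       (tm_delta M q s)),
      (forall q s, (tm_nstates M <= q) || (tm_nsyms M <= s) -> tm_delta M q s = [::])
    & (forall q s, uniq (tm_delta M q s))].

Definition deterministic (M : TM) : Prop := forall q s, size (tm_delta M q s) <= 1.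

(* configuration: state, left part of tape (reversed, nearest cell first),
   right part of tape starting with the scanned cell *)
Record config := Config { c_state : nat; c_left : seq nat; c_right : seq nat }.

Definition read (c : config) : nat := head 0 (c_right c).

Definition apply_trans (c : config) (t : nat * nat * move) : config :=
  let: (q, s, m) := t in
  let r := s :: behead (c_right c) in
  match m with
  | MoveS => Config q (c_left c) r
  | MoveR => Config q (s :: c_left c) (behead r)
  | MoveL => match c_left c with
             | a :: l => Config q l (a :: r)
             | [::] => Config q [::] (0 :: r)
             end
  end.

Definition step (M : TM) (c : config) : seq config :=
  map (apply_trans c) (tm_delta M (c_state c) (read c)).

Definition encode_bit (b : bool) : nat := if b then 2 else 1.

Definition init (M : TM) (x : seq bool) : config :=
  Config (tm_start M) [::] (map encode_bit x).

Fixpoint halts_within (M : TM) (fuel : nat) (c : config) : bool :=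
  nilp (step M c) ||
  match fuel with 0 => false | f.+1 => all (halts_within M f) (step M c) end.

Definition poly_time_with (M : TM) (k : nat) : Prop :=
  forall x : seq bool, halts_within M (size x ^ k + k) (init M x).

Fixpoint leaves (M : TM) (fuel : nat) (c : config) : seq config :=
  match step M c with
  | [::] => [:: c]
  | cs => match fuel with 0 => [:: c] | f.+1 => flatten (map (leaves M f) cs) end
  end.

Definition paths (M : TM) (k : nat) (x : seq bool) : seq config :=
  leaves M (size x ^ k + k) (init M x).

Definition acc (M : TM) (k : nat) (x : seq bool) : nat :=
  count (fun c => tm_accept M (c_state c)) (paths M k x).
Definition rej (M : TM) (k : nat) (x : seq bool) : nat :=
  count (fun c => ~~ tm_accept M (c_state c)) (paths M k x).
Definition tot (M : TM) (k : nat) (x : seq bool) : nat := (size (paths M k x)).-1.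

Definition NPTM (M : TM) (k : nat) : Prop := wf_TM M /\ poly_time_with M k.

Local Open Scope ring_scope.
Definition GapP (f : seq bool -> int) : Prop :=
  exists M k, NPTM M k /\ forall x, f x = (acc M k x)%:Z - (rej M k x)%:Z.

Definition TotP (f : seq bool -> nat) : Prop :=
  exists M k, NPTM M k /\ forall x, f x = tot M k x.

Definition GaptotP (f : seq bool -> int) : Prop :=
  exists g h, TotP g /\ TotP h /\ forall x, f x = (g x)%:Z - (h x)%:Z.

(* output of a deterministic machine: the binary word (symbols 1/2, most
   significant bit first) starting at the head position of the final
   configuration, read as a natural number *)
Fixpoint out_bits (s : seq nat) : seq bool :=
  match s with
  | 1 :: t => false :: out_bits t
  | 2 :: t => true :: out_bits t
  | _ => [::]
  end.
Definition bits_val (bs : seq bool) : nat := foldl (fun n (b : bool) => n.*2 + b) 0 bs.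

Definition FP (g : seq bool -> nat) : Prop :=
  exists M k, NPTM M k /\ deterministic M /\
    forall x, g x = bits_val (out_bits (c_right (head (init M x) (paths M k x)))).

Definition language := seq bool -> bool.

Definition SPP (L : language) : Prop :=
  exists f, GapP f /\ forall x, f x = (if L x then 1 else 0).
Definition SPtotP (L : language) : Prop :=
  exists f, GaptotP f /\ forall x, f x = (if L x then 1 else 0).

Definition WPP (L : language) : Prop :=
  exists f g, GapP f /\ FP g /\ (forall x, g x <> 0%N) /\
    forall x, f x = (if L x then (g x)%:Z else 0).
Definition WPtotP (L : language) : Prop :=
  exists f g, GaptotP f /\ FP g /\ (forall x, g x <> 0%N) /\
    forall x, f x = (if L x then (g x)%:Z else 0).

Definition CeqP (L : language) : Prop :=
  exists f, GapP f /\ forall x, L x <-> f x = 0.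
Definition CeqtotP (L : language) : Prop :=
  exists f, GaptotP f /\ forall x, L x <-> f x = 0.

Definition PP (L : language) : Prop :=
  exists f, GapP f /\ forall x, L x <-> 0 < f x.
Definition PtotP (L : language) : Prop :=
  exists f, GaptotP f /\ forall x, L x <-> 0 < f x.

(* Proof idea: all four equalities follow from GapP = Gap_totP, since each pair
   of classes is defined by the same condition on a gap function.
   Given an NPTM M, let M_acc (resp. M_rej) be M in which every halting path
   ending in an accepting (resp. rejecting) state forks into two halting
   paths. Then tot M_acc = (acc + rej) + acc - 1 and tot M_rej = (acc + rej) +
   rej - 1, whose difference is acc - rej.
   Conversely, for g = tot M1 and h = tot M2, the machine that first branches
   into M1, all of whose paths accept, and M2, all of whose paths reject, has
   acc = g + 1 and rej = h + 1, so acc - rej = g - h. *)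
From HB Require Import structures.
From mathcomp Require Import all_boot all_order all_algebra.
From mathcomp Require Import zify.
Set Implicit Arguments. Unset Strict Implicit. Unset Printing Implicit Defensive.

Definition config_tuple (c : config) := (c_state c, c_left c, c_right c).
Definition tuple_config (t : nat * seq nat * seq nat) := Config t.1.1 t.1.2 t.2.
Lemma config_tupleK : cancel config_tuple tuple_config. Proof. by case. Qed.
HB.instance Definition _ := Equality.copy config (can_type config_tupleK).

Section Computations.
Variable M : TM.

Lemma leavesE f c : leaves M f c =
  if step M c is [::] then [:: c] else
  if f is f'.+1 then flatten (map (leaves M f') (step M c)) else [:: c].
Proof. by case: f => [|f] /=; case: (step M c). Qed.

Lemma halts_withinE f c : halts_within M f c =
  nilp (step M c) || (if f is f'.+1 then all (halts_within M f') (step M c) else false).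
Proof. by case: f. Qed.

Lemma leaves_halted f c : step M c = [::] -> leaves M f c = [:: c].
Proof. by move=> E; rewrite leavesE E. Qed.

Lemma halts_within_halted f c : step M c = [::] -> halts_within M f c.
Proof. by move=> E; rewrite halts_withinE E. Qed.

Lemma leaves_step f c cs : step M c = cs -> ~~ nilp cs ->
  leaves M f.+1 c = flatten (map (leaves M f) cs).
Proof. by move=> <-; rewrite leavesE; case: (step M c). Qed.

Lemma halts_within_step f c cs : step M c = cs -> ~~ nilp cs ->
  halts_within M f.+1 c = all (halts_within M f) cs.
Proof. by move=> <-; rewrite halts_withinE; case: (step M c). Qed.

Lemma halts_within0 c : halts_within M 0 c -> step M c = [::].
Proof. by rewrite halts_withinE orbF => /nilP. Qed.

Lemma halts_within_more_fuel f f' c : f <= f' -> halts_within M f c ->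
  halts_within M f' c /\ leaves M f' c = leaves M f c.
Proof.
elim: f f' c => [|f IH] f' c le_ff'.
  by move/halts_within0 => E; rewrite !leaves_halted ?halts_within_halted.
case E: (step M c) => [|d ds]; first by rewrite !leaves_halted ?halts_within_halted.
case: f' le_ff' => [//|f'] le_ff'.
rewrite !(halts_within_step _ E) // !(leaves_step _ E) //.
move: (d :: ds) => cs /allP cs_halt; split.
  by apply/allP => e /cs_halt/(IH f' _ le_ff')[].
by congr flatten; apply/eq_in_map => e /cs_halt/(IH f' _ le_ff')[].
Qed.

Lemma leaves_invariant (inv : pred config) :
  (forall c, inv c -> all inv (step M c)) ->
  forall f c, inv c -> all inv (leaves M f c).
Proof.
move=> inv_step; elim=> [|f IH] c inv_c; rewrite leavesE.
  by case: (step M c) => /=; rewrite inv_c.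
have := inv_step c inv_c; case: (step M c) => [|d ds]; first by rewrite /= inv_c.
move: (d :: ds) => cs /allP inv_cs.
by apply/allP => e /flattenP[_ /mapP[d' /inv_cs/(IH d')/allP inv_d' ->]]; apply: inv_d'.
Qed.

Lemma size_leaves_gt0 f c : 0 < size (leaves M f c).
Proof.
elim: f c => [|f IH] c; rewrite leavesE; case: (step M c) => [|d ds] //=.
by rewrite size_cat addn_gt0 IH.
Qed.

Lemma eq_step c d : c_state c = c_state d -> c_left c = c_left d -> read c = read d ->
  behead (c_right c) = behead (c_right d) -> step M c = step M d.
Proof.
case: c d => q l r [q' l' r'] /= -> -> eq_read eq_rest.
by rewrite /step /= eq_read; apply: eq_map => -[[q0 s] []] /=; rewrite eq_rest.
Qed.

Lemma eq_leaves_states f c d : step M c = step M d -> c_state c = c_state d ->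
  map c_state (leaves M f c) = map c_state (leaves M f d) /\
  halts_within M f c = halts_within M f d.
Proof.
move=> eq_step_cd eq_q; rewrite !leavesE !halts_withinE eq_step_cd.
by case: f => [|f]; case: (step M d) => [|e es] /=; rewrite ?eq_q.
Qed.

End Computations.

Lemma leaves_simulation M N (phi : config -> config) (inv : pred config) :
  (forall c, inv c -> step N (phi c) = map phi (step M c)) ->
  (forall c, inv c -> all inv (step M c)) ->
  forall f c, inv c -> leaves N f (phi c) = map phi (leaves M f c) /\
    halts_within N f (phi c) = halts_within M f c.
Proof.
move=> step_phi inv_step; elim=> [|f IH] c inv_c.
  by rewrite !leavesE !halts_withinE step_phi //; case: (step M c).
have := inv_step c inv_c; have := step_phi c inv_c.
case E: (step M c) => [|d ds] E'; first by rewrite !leaves_halted ?halts_within_halted.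
rewrite (leaves_step _ E) // (leaves_step _ E') // (halts_within_step _ E) //.
rewrite (halts_within_step _ E') //.
move: (d :: ds) => cs /allP inv_cs; split.
  by rewrite map_flatten -!map_comp; congr flatten; apply/eq_in_map => e /inv_cs/IH[].
by rewrite all_map; apply/eq_in_all => e /inv_cs/IH[].
Qed.

Lemma fuel_ltn n k k' : k.+2 <= k' -> n ^ k + k < n ^ k' + k'.
Proof.
case: n => [|n] le_kk'.
  rewrite (exp0n (_ : 0 < k')); last lia.
  have : 0 ^ k <= 1 by case: k {le_kk'} => // k; rewrite exp0n.
  lia.
have := @leq_pexp2l n.+1 k k' isT (ltnW (ltnW le_kk')); lia.
Qed.

Definition in_range (M : TM) (c : config) :=
  [&& c_state c < tm_nstates M, all (fun s => s < tm_nsyms M) (c_left c)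
    & all (fun s => s < tm_nsyms M) (c_right c)].

Lemma state_apply_trans c q s m : c_state (apply_trans c (q, s, m)) = q.
Proof. by case: m => //=; case: (c_left c). Qed.

Section WellFormed.
Variable M : TM.
Hypothesis wfM : wf_TM M.

Lemma step_state_lt c : all (fun d => c_state d < tm_nstates M) (step M c).
Proof.
case: wfM => _ _ delta_lt _ _; rewrite /step all_map; apply/allP => -[[q s] m] qsm_in /=.
by have /andP[q_lt _] := allP (delta_lt (c_state c) (read c)) _ qsm_in; rewrite state_apply_trans.
Qed.

Lemma read_lt_nsyms c : in_range M c -> read c < tm_nsyms M.
Proof.
case: wfM => nsyms_ge3 _ _ _ _ /and3P[_ _]; rewrite /read.
by case: (c_right c) => [_|a r /andP[]] /=; first lia.
Qed.

Lemma step_in_range c : in_range M c -> all (in_range M) (step M c).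
Proof.
move=> c_in; have read_lt := read_lt_nsyms c_in.
case: wfM c_in => nsyms_ge3 _ delta_lt _ _ /and3P[_ left_in right_in].
rewrite /step all_map; apply/allP => -[[q s] m] qsm_in.
have /andP[/= q_lt s_lt] := allP (delta_lt _ _) _ qsm_in.
have rest_in : all (fun s => s < tm_nsyms M) (behead (c_right c)).
  by case: (c_right c) right_in => //= ? ? /andP[].
case: c left_in rest_in {right_in read_lt qsm_in} => q0 l r /= left_in rest_in.
case: m; rewrite /in_range /=.
- case: l left_in => [_|a l /andP[a_lt l_in]] /=.
    by rewrite q_lt s_lt rest_in !andbT; lia.
  by rewrite q_lt a_lt s_lt rest_in !andbT.
- by rewrite q_lt s_lt left_in.
- by rewrite q_lt left_in s_lt rest_in.
Qed.

Lemma init_in_range x : in_range M (init M x).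
Proof.
case: wfM => nsyms_ge3 start_lt _ _ _; rewrite /in_range /= start_lt /=.
by apply/allP => s /mapP[[] _ ->] /=; lia.
Qed.

End WellFormed.

Definition fork_halting (M : TM) (p : pred nat) : TM :=
  {| tm_nstates := (tm_nstates M).+2; tm_nsyms := tm_nsyms M; tm_start := tm_start M;
     tm_accept := tm_accept M;
     tm_delta := fun q s =>
       if [&& q < tm_nstates M, s < tm_nsyms M, p q & nilp (tm_delta M q s)]
       then [:: (tm_nstates M, s, MoveS); ((tm_nstates M).+1, s, MoveS)]
       else tm_delta M q s |}.

Section ForkHalting.
Variables (M : TM) (p : pred nat).
Hypothesis wfM : wf_TM M.
Let N := fork_halting M p.

Lemma wf_fork_halting : wf_TM N.
Proof.
case: wfM => nsyms_ge3 start_lt delta_lt delta_nil delta_uniq; split => //=.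
- lia.
- move=> q s; case: ifP => [/and4P[_ s_lt _ _]|_] /=.
    by rewrite s_lt /= !andbT; lia.
  apply/allP => t t_in; have /andP[q_lt s_lt] := allP (delta_lt q s) t t_in.
  by rewrite s_lt andbT; lia.
- move=> q s out; case: ifP => [/and4P[q_lt s_lt _ _]|_]; first by case/orP: out; lia.
  by apply: delta_nil; case/orP: out => ?; apply/orP; [left|right]; lia.
- by move=> q s; case: ifP => _ //=; rewrite inE andbT; apply/eqP => -[]; lia.
Qed.

Lemma step_fork_halting c : in_range M c ->
  step N c = if nilp (step M c) && p (c_state c) then
    [:: apply_trans c (tm_nstates M, read c, MoveS);
        apply_trans c ((tm_nstates M).+1, read c, MoveS)]
  else step M c.
Proof.
move=> c_in; have read_lt := read_lt_nsyms wfM c_in.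
case/and3P: c_in => q_lt _ _.
rewrite /step /= q_lt read_lt /= /nilp size_map.
by case: (p _); case: (tm_delta M _ _).
Qed.

Lemma step_fork_halting_fresh c : tm_nstates M <= c_state c -> step N c = [::].
Proof.
case: wfM => _ _ _ delta_nil _ q_ge; rewrite /step /= ltnNge q_ge /=.
by rewrite delta_nil // q_ge.
Qed.

Lemma fork_halting_halted f c : in_range M c -> step M c = [::] ->
  halts_within N f.+1 c /\ size (leaves N f.+1 c) = 1 + p (c_state c).
Proof.
move=> c_in E; have := step_fork_halting c_in; rewrite E andTb.
case: (p (c_state c)) => step_c; last by rewrite leaves_halted ?halts_within_halted.
rewrite (halts_within_step _ step_c) // (leaves_step _ step_c) //=.
by rewrite !leaves_halted ?halts_within_halted ?step_fork_halting_fresh ?state_apply_trans.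
Qed.

Lemma fork_halting_leaves f c : in_range M c -> halts_within M f c ->
  halts_within N f.+1 c /\
  size (leaves N f.+1 c) = size (leaves M f c) + count (fun d => p (c_state d)) (leaves M f c).
Proof.
elim: f c => [|f IH] c c_in; case E: (step M c) => [|d ds] halts_c.
- have [? ->] := fork_halting_halted 0 c_in E.
  by split=> //; rewrite leaves_halted //= addn0.
- by rewrite halts_withinE E in halts_c.
- have [? ->] := fork_halting_halted f.+1 c_in E.
  by split=> //; rewrite leaves_halted //= addn0.
have step_N : step N c = d :: ds by rewrite step_fork_halting // E.
move: halts_c; rewrite (halts_within_step _ E) // (leaves_step _ E) //.
rewrite (halts_within_step _ step_N) // (leaves_step _ step_N) //.
have := step_in_range wfM c_in; rewrite E; move: (d :: ds) => cs /allP cs_in /allP cs_halt.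
have IH_cs e : e \in cs -> halts_within N f.+1 e /\
    size (leaves N f.+1 e) = size (leaves M f e) + count (fun d => p (c_state d)) (leaves M f e).
  by move=> e_cs; apply: IH; [apply: cs_in | apply: cs_halt].
split; first by apply/allP => e /IH_cs[].
rewrite -!count_predT !count_flatten !sumnE !big_map -big_split.
by apply: eq_big_seq => e /IH_cs[_]; rewrite !count_predT.
Qed.

End ForkHalting.

Lemma TotP_fork_halting M k (p : pred nat) : NPTM M k ->
  TotP (fun x => (size (paths M k x) + count (fun d => p (c_state d)) (paths M k x)).-1).
Proof.
case=> wfM timeM; set N := fork_halting M p; exists N, k.+2.
have paths_N x : halts_within N (size x ^ k.+2 + k.+2) (init N x) /\
    tot N k.+2 x = (size (paths M k x) + count (fun d => p (c_state d)) (paths M k x)).-1.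
  have [halts size_N] := fork_halting_leaves p wfM (init_in_range wfM x) (timeM x).
  have [halts_N eq_leaves] := halts_within_more_fuel (fuel_ltn (size x) (leqnn k.+2)) halts.
  by rewrite /tot /paths eq_leaves size_N.
split; first by split=> [|x]; [exact: wf_fork_halting | have [] := paths_N x].
by move=> x; have [] := paths_N x.
Qed.

Definition shift_trans (Q : nat) (t : nat * nat * move) : nat * nat * move :=
  (t.1.1 + Q, t.1.2, t.2).
Definition shift_config (Q : nat) (c : config) : config :=
  Config (c_state c + Q) (c_left c) (c_right c).

Definition either_TM (M1 M2 : TM) : TM :=
  let Q1 := tm_nstates M1 in let Q2 := tm_nstates M2 in
  let S := maxn (tm_nsyms M1) (tm_nsyms M2) in
  {| tm_nstates := (Q1 + Q2).+1; tm_nsyms := S; tm_start := Q1 + Q2;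
     tm_accept := fun q => q < Q1;
     tm_delta := fun q s =>
       if q < Q1 then tm_delta M1 q s
       else if q < Q1 + Q2 then map (shift_trans Q1) (tm_delta M2 (q - Q1) s)
       else if (q == Q1 + Q2) && (s < S)
       then [:: (tm_start M1, s, MoveS); (tm_start M2 + Q1, s, MoveS)]
       else [::] |}.

(* This is init M x, except that on the empty input the scanned blank is
   explicit, as after a first step that rewrites the scanned symbol. *)
Definition padded_init (M : TM) (x : seq bool) : config :=
  Config (tm_start M) [::] (head 0 (map encode_bit x) :: behead (map encode_bit x)).

Lemma step_padded_init M x : step M (padded_init M x) = step M (init M x).
Proof. exact: eq_step. Qed.

Section EitherTM.
Variables M1 M2 : TM.
Hypotheses (wf1 : wf_TM M1) (wf2 : wf_TM M2).
Let N := either_TM M1 M2.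
Let Q1 := tm_nstates M1.

Lemma wf_either_TM : wf_TM N.
Proof.
case: wf1 wf2 => nsyms1 start1 delta1 nil1 uniq1 [nsyms2 start2 delta2 nil2 uniq2].
split => /=.
- lia.
- lia.
- move=> q s; case: ifP => q_lt1.
    by apply/allP => t /(allP (delta1 q s))/andP[? ?]; apply/andP; split; lia.
  case: ifP => q_lt.
    by rewrite all_map; apply/allP => t /(allP (delta2 _ s))/andP[? ?]; apply/andP; split=> /=; lia.
  by case: ifP => [/andP[_ s_lt]|_] //=; rewrite !andbT; apply/andP; split; lia.
- move=> q s out; case: ifP => q_lt1.
    by apply: nil1; case/orP: out => ?; apply/orP; [left|right]; lia.
  case: ifP => q_lt.
    by rewrite nil2 //; case/orP: out => ?; apply/orP; [left|right]; lia.
  by case: ifP => // /andP[/eqP ? ?]; case/orP: out; lia.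
- move=> q s; case: ifP => _; first exact: uniq1.
  case: ifP => _.
    by rewrite map_inj_uniq // => -[[a b] c] [[a' b'] c'] [] /addIn -> -> ->.
  by case: ifP => _ //=; rewrite inE andbT; apply/eqP => -[]; lia.
Qed.

Lemma step_either_left c : c_state c < Q1 -> step N c = step M1 c.
Proof. by move=> q_lt; rewrite /step /= q_lt. Qed.

Lemma step_either_right c : c_state c < tm_nstates M2 ->
  step N (shift_config Q1 c) = map (shift_config Q1) (step M2 c).
Proof.
move=> q_lt; rewrite /step /= ltnNge leq_addl /=.
rewrite (_ : c_state c + Q1 < Q1 + tm_nstates M2); last by rewrite addnC ltn_add2l.
rewrite addnK -!map_comp; apply: eq_map => -[[q s] m] /=.
by case: m => //=; case: (c_left c).
Qed.

Lemma step_either_init x :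
  step N (init N x) = [:: padded_init M1 x; shift_config Q1 (padded_init M2 x)].
Proof.
rewrite /step /= ltnNge leq_addr /= ltnn eqxx /=.
have read_lt : head 0 (map encode_bit x) < maxn (tm_nsyms M1) (tm_nsyms M2).
  by case: wf1 => nsyms1 _ _ _ _; case: x => [|[] x] /=; lia.
by rewrite read_lt.
Qed.

Lemma leaves_either_init f x :
  leaves N f.+1 (init N x) =
    leaves M1 f (padded_init M1 x) ++ map (shift_config Q1) (leaves M2 f (padded_init M2 x)) /\
  halts_within N f.+1 (init N x) =
    halts_within M1 f (padded_init M1 x) && halts_within M2 f (padded_init M2 x).
Proof.
have [start1 start2] : tm_start M1 < Q1 /\ tm_start M2 < tm_nstates M2.
  by case: wf1; case: wf2.
have step_left c : c_state c < Q1 -> step N (id c) = map id (step M1 c).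
  by move=> q_lt; rewrite map_id step_either_left.
have [leaves1 halts1] := leaves_simulation step_left
  (fun c _ => step_state_lt wf1 c) f (c := padded_init M1 x) start1.
have [leaves2 halts2] := leaves_simulation (@step_either_right)
  (fun c _ => step_state_lt wf2 c) f (c := padded_init M2 x) start2.
rewrite (leaves_step _ (step_either_init x)) // (halts_within_step _ (step_either_init x)) //=.
by rewrite leaves1 leaves2 halts1 halts2 map_id cats0 andbT.
Qed.

End EitherTM.


Lemma states_paths_either_TM M1 M2 k1 k2 x : NPTM M1 k1 -> NPTM M2 k2 ->
  let N := either_TM M1 M2 in let k := k1 + k2 + 2 in
  halts_within N (size x ^ k + k) (init N x) /\
  map c_state (paths N k x) =
    map c_state (paths M1 k1 x) ++ map (addn^~ (tm_nstates M1)) (map c_state (paths M2 k2 x)).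
Proof.
case=> wf1 time1 [wf2 time2] N k.
set f := (size x ^ k + k).-1.
have fuel_f : size x ^ k + k = f.+1 by rewrite prednK // /k; lia.
have fuel1 : size x ^ k1 + k1 <= f by have := @fuel_ltn (size x) k1 k; lia.
have fuel2 : size x ^ k2 + k2 <= f by have := @fuel_ltn (size x) k2 k; lia.
have [halts1 leaves1] := halts_within_more_fuel fuel1 (time1 x).
have [halts2 leaves2] := halts_within_more_fuel fuel2 (time2 x).
have [states1 padded1] := eq_leaves_states f (step_padded_init M1 x) erefl.
have [states2 padded2] := eq_leaves_states f (step_padded_init M2 x) erefl.
have [leavesN haltsN] := leaves_either_init wf1 wf2 f x.
split; first by rewrite fuel_f haltsN padded1 padded2 halts1 halts2.
rewrite /paths fuel_f leavesN map_cat states1 leaves1 -leaves2 -states2.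
by rewrite -!map_comp.
Qed.

Lemma acc_add_rej M k x : acc M k x + rej M k x = size (paths M k x).
Proof. exact: count_predC. Qed.

Lemma count_shifted_lt Q s : count (fun q => q < Q) (map (addn^~ Q) s) = 0.
Proof. by elim: s => //= q s ->; rewrite ltnNge leq_addl. Qed.

Lemma GapP_either_TM M1 M2 k1 k2 : NPTM M1 k1 -> NPTM M2 k2 ->
  GapP (fun x => ((tot M1 k1 x)%:Z - (tot M2 k2 x)%:Z)%R).
Proof.
move=> NP1 NP2; have [wf1 _] := NP1; have [wf2 _] := NP2.
set N := either_TM M1 M2; set k := k1 + k2 + 2.
exists N, k; split.
  by split; [exact: wf_either_TM | move=> x; have [] := states_paths_either_TM x NP1 NP2].
move=> x; have [_ states] := states_paths_either_TM x NP1 NP2.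
have size_N : size (paths N k x) = size (paths M1 k1 x) + size (paths M2 k2 x).
  by rewrite -(size_map c_state) states size_cat !size_map.
have states1_lt : all (fun q => q < tm_nstates M1) (map c_state (paths M1 k1 x)).
  rewrite all_map; apply: (leaves_invariant (fun c _ => step_state_lt wf1 c)).
  by case: wf1.
have acc_N : acc N k x = size (paths M1 k1 x).
  rewrite /acc -(count_map c_state (fun q => q < tm_nstates M1)) states count_cat.
  by move: states1_lt; rewrite count_shifted_lt addn0 all_count size_map => /eqP.
have := acc_add_rej N k x.
have := size_leaves_gt0 M1 (size x ^ k1 + k1) (init M1 x).
have := size_leaves_gt0 M2 (size x ^ k2 + k2) (init M2 x).
rewrite acc_N size_N /tot /paths; lia.
Qed.

Lemma GapP_GaptotP f : GapP f -> GaptotP f.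
Proof.
case=> M [k [NPM gap]].
exists (fun x => (size (paths M k x) + acc M k x).-1),
       (fun x => (size (paths M k x) + rej M k x).-1).
split; first exact: (TotP_fork_halting (tm_accept M) NPM).
split; first exact: (TotP_fork_halting (fun q => ~~ tm_accept M q) NPM).
by move=> x; rewrite gap -acc_add_rej; lia.
Qed.

Lemma GaptotP_GapP f : GaptotP f -> GapP f.
Proof.
case=> g [h [[M1 [k1 [NP1 tot_g]]] [[M2 [k2 [NP2 tot_h]]] gap]]].
have [M [k [NPM gapM]]] := GapP_either_TM NP1 NP2.
by exists M, k; split=> // x; rewrite gap tot_g tot_h gapM.
Qed.

Lemma GapP_GaptotP_iff f : GapP f <-> GaptotP f.
Proof. by split; [apply: GapP_GaptotP | apply: GaptotP_GapP]. Qed.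

Theorem corollary2 :
  (forall L : language, SPtotP L <-> SPP L) /\
  (forall L : language, WPtotP L <-> WPP L) /\
  (forall L : language, CeqtotP L <-> CeqP L) /\
  (forall L : language, PtotP L <-> PP L).
Proof.
split; [|split; [|split]] => L.
- by split=> -[f [gap_f spec]]; exists f; split=> //; apply/GapP_GaptotP_iff.
- by split=> -[f [g [gap_f spec]]]; exists f, g; split=> //; apply/GapP_GaptotP_iff.
- by split=> -[f [gap_f spec]]; exists f; split=> //; apply/GapP_GaptotP_iff.
- by split=> -[f [gap_f spec]]; exists f; split=> //; apply/GapP_GaptotP_iff.
Qed.
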